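(* Let $L$ be a lattice that has no doubly reducible elements, and let $a_1,a_2,a_3,b_1,b_2,b_3$ be six distinct elements of $L$ such that $a_1<a_2<a_3$, $b_1<b_2<b_3$, $a_1<b_3$ and $b_1<a_3$. Assume moreover that $a_2\parallel b_i$ for all $1\le i\le 3$, that $a_i\parallel b_2$ for all $1\le i\le 3$, that $a_2\vee b_2=a_3\vee b_3$, and that $a_2\wedge b_2=a_1\wedge b_1$. Then $L$ has a sublattice isomorphic to $L_{15}$.
   Context: For elements $x,y$ of a poset, $x\parallel y$ means that neither $x\le y$ nor $y\le x$. An element $x$ of a lattice $L$ is doubly reducible if there exist $x_1,x_2,x_3,x_4\in L$ with $x_1\parallel x_2$, $x_3\parallel x_4$, and $x=x_1\vee x_2=x_3\wedge x_4$. The lattice $L_{15}$ is the ten-element lattice with elements $0,u,v,p,q,s,t,1,g,h$ whose Hasse diagram has exactly the covering relations $0\prec u$, $0\prec v$, $u\prec p$, $v\prec p$, $p\prec q$, $q\prec s$, $q\prec t$, $s\prec 1$, $t\prec 1$, $u\prec g$, $g\prec s$, $v\prec h$, $h\prec t$ (so $p=u\vee v$, $q=s\wedge t$, and $g$ lies strictly between $u$ and $s$, $h$ strictly between $v$ and $t$). *)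

From HB Require Import structures.
From mathcomp Require Import all_boot all_order.
From Stdlib Require Import Relations.Relation_Operators.
Set Implicit Arguments. Unset Strict Implicit. Unset Printing Implicit Defensive.
Import Order.TTheory.
Local Open Scope order_scope.

Definition doubly_reducible {d : Order.disp_t} {L : latticeType d} (x : L) : Prop :=
  exists x1 x2 x3 x4 : L,
    [/\ x1 >< x2, x3 >< x4, x = x1 `|` x2 & x = x3 `&` x4].

Inductive L15 : Type :=
  | L15_0 | L15_u | L15_v | L15_p | L15_q | L15_s | L15_t | L15_1 | L15_g | L15_h.

Definition cover15 (x y : L15) : Prop :=
  match x, y with
  | L15_0, L15_u | L15_0, L15_v
  | L15_u, L15_p | L15_v, L15_p
  | L15_p, L15_q
  | L15_q, L15_s | L15_q, L15_t
  | L15_s, L15_1 | L15_t, L15_1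
  | L15_u, L15_g | L15_g, L15_s
  | L15_v, L15_h | L15_h, L15_t => True
  | _, _ => False
  end.

Definition le15 : L15 -> L15 -> Prop := clos_refl_trans L15 cover15.

Definition has_L15_sublattice {d : Order.disp_t} (L : latticeType d) : Prop :=
  exists f : L15 -> L,
    [/\ injective f,
        (forall x y, le15 x y <-> f x <= f y),
        (forall x y, exists z, f z = f x `&` f y) &
        (forall x y, exists z, f z = f x `|` f y)].

From HB Require Import structures.
From mathcomp Require Import all_boot all_order.
From Stdlib Require Import Relations.Relation_Operators.
Set Implicit Arguments. Unset Strict Implicit. Unset Printing Implicit Defensive.
Import Order.TTheory.
Local Open Scope order_scope.

(* With U = a2 /\ b3, V = a3 /\ b2, S = a2 \/ V and T = U \/ b2, the elements
   a2 /\ b2, U, V, U \/ V, S /\ T, S, T, a2 \/ b2, a2, b2 are the images of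
   0, u, v, p, q, s, t, 1, g, h.  A monotone map from L15 is a sublattice
   embedding as soon as it respects seven non-inequalities j </= m (every
   failure x </= y of L15 lies above one of them) and four meets and four joins
   of generators (every meet or join of an incomparable pair of L15 is squeezed
   by one of them).  For this map all of these follow from the order relations
   and incomparabilities among the a_i and b_i, except q </= p: if
   U \/ V = S /\ T, that element would be doubly reducible, as U || V and
   S || T. *)

Definition le15b (x y : L15) : bool :=
  match x, y with
  | L15_0, _ | _, L15_1 => true
  | L15_u, (L15_u | L15_p | L15_q | L15_s | L15_t | L15_g) => true
  | L15_v, (L15_v | L15_p | L15_q | L15_s | L15_t | L15_h) => true
  | L15_p, (L15_p | L15_q | L15_s | L15_t) => true
  | L15_q, (L15_q | L15_s | L15_t) => true
  | L15_s, L15_s | L15_t, L15_t => true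
  | L15_g, (L15_g | L15_s) => true
  | L15_h, (L15_h | L15_t) => true
  | _, _ => false
  end.

Lemma le15b_trans x y z : le15b x y -> le15b y z -> le15b x z.
Proof. by case: x; case: y; case: z. Qed.

Lemma le15b_anti x y : le15b x y -> le15b y x -> x = y.
Proof. by case: x; case: y. Qed.

Ltac for15 k :=
  first [ k L15_0 | k L15_u | k L15_v | k L15_p | k L15_q
        | k L15_s | k L15_t | k L15_1 | k L15_g | k L15_h ].

Ltac cover_chain15 :=
  first [ apply: rt_refl | apply: rt_step; exact: I
        | for15 ltac:(fun z => apply: (@rt_trans _ _ _ z);
                               [apply: rt_step; exact: I | cover_chain15]) ].

Lemma le15P x y : reflect (le15 x y) (le15b x y).
Proof.
apply: (iffP idP); first by case: x; case: y => //= _; cover_chain15.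
elim=> [{}x {}y | {}x | {}x z {}y _ xz _ zy]; first by case: x; case: y.
- by case: x.
- exact: le15b_trans xz zy.
Qed.

Definition nle_gen15 (j m : L15) : bool :=
  match j, m with
  | L15_u, L15_h | L15_v, L15_g | L15_g, L15_t | L15_h, L15_s
  | L15_g, L15_h | L15_h, L15_g | L15_q, L15_p => true
  | _, _ => false
  end.

Definition meet_gen15 (X Y z : L15) : bool :=
  match X, Y, z with
  | L15_g, L15_h, L15_0 | L15_g, L15_t, L15_u
  | L15_s, L15_h, L15_v | L15_s, L15_t, L15_q => true
  | _, _, _ => false
  end.

Definition join_gen15 (X Y z : L15) : bool :=
  match X, Y, z with
  | L15_u, L15_v, L15_p | L15_u, L15_h, L15_t
  | L15_g, L15_v, L15_s | L15_g, L15_h, L15_1 => true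
  | _, _, _ => false
  end.

Lemma nle15_witness x y : ~~ le15b x y ->
  exists j m, [&& le15b j x, le15b y m & nle_gen15 j m].
Proof.
by case: x; case: y => //= _;
  for15 ltac:(fun j => exists j; for15 ltac:(fun m => exists m; done)).
Qed.

Lemma meet15_witness x y : ~~ le15b x y -> ~~ le15b y x ->
  exists z X Y, [&& meet_gen15 X Y z || meet_gen15 Y X z,
                    le15b z x, le15b z y, le15b x X & le15b y Y].
Proof.
by case: x; case: y => //= _ _;
  for15 ltac:(fun z => exists z; for15 ltac:(fun X => exists X;
    for15 ltac:(fun Y => exists Y; done))).
Qed.

Lemma join15_witness x y : ~~ le15b x y -> ~~ le15b y x ->
  exists z X Y, [&& join_gen15 X Y z || join_gen15 Y X z,
                    le15b x z, le15b y z, le15b X x & le15b Y y].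
Proof.
by case: x; case: y => //= _ _;
  for15 ltac:(fun z => exists z; for15 ltac:(fun X => exists X;
    for15 ltac:(fun Y => exists Y; done))).
Qed.

Section LatticeFacts.
Variables (d : Order.disp_t) (L : latticeType d).
Implicit Types x y z X Y : L.

Lemma meet_sandwich x y X Y z :
  z <= x -> z <= y -> x <= X -> y <= Y -> X `&` Y = z -> x `&` y = z.
Proof.
move=> zx zy xX yY XYz; apply/le_anti/andP; split; last by rewrite lexI zx zy.
by rewrite -XYz leI2.
Qed.

Lemma join_sandwich x y X Y z :
  x <= z -> y <= z -> X <= x -> Y <= y -> X `|` Y = z -> x `|` y = z.
Proof.
move=> xz yz Xx Yy XYz; apply/le_anti/andP; split; first by rewrite leUx xz yz.
by rewrite -XYz leU2.
Qed.

Lemma incomparable_nle x y x' y' : x >< y -> x <= x' -> y' <= y -> ~~ (x' <= y').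
Proof.
move=> xy xx' y'y; apply/negP => x'y'.
by have := le_trans xx' (le_trans x'y' y'y); rewrite (incomparable_leF xy).
Qed.

End LatticeFacts.

Section SublatticeCriterion.
Variables (d : Order.disp_t) (L : latticeType d) (f : L15 -> L).
Hypothesis f_cover : forall x y, cover15 x y -> f x <= f y.
Hypothesis f_nle_gen : forall j m, nle_gen15 j m -> ~~ (f j <= f m).
Hypothesis f_meet_gen : forall X Y z, meet_gen15 X Y z -> f X `&` f Y = f z.
Hypothesis f_join_gen : forall X Y z, join_gen15 X Y z -> f X `|` f Y = f z.

Lemma le15b_homo x y : le15b x y -> f x <= f y.
Proof.
move/le15P; elim=> [{}x {}y /f_cover | {}x | {}x z {}y _ xz _ zy] //.
exact: le_trans xz zy.
Qed.

Lemma le15_mono x y : le15 x y <-> f x <= f y.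
Proof.
split=> [/le15P/le15b_homo // | fxy].
apply/le15P/negPn/negP => nxy.
have [j [m /and3P[jx ym jm]]] := nle15_witness nxy.
have := f_nle_gen jm.
by rewrite (le_trans (le15b_homo jx) (le_trans fxy (le15b_homo ym))).
Qed.

Lemma f_inj : injective f.
Proof.
by move=> x y fxy; apply: le15b_anti; apply/le15P/le15_mono; rewrite fxy.
Qed.

Lemma f_meet_closed x y : exists z, f z = f x `&` f y.
Proof.
have [xy | nxy] := boolP (le15b x y).
  by exists x; apply/esym/meet_idPl/le15b_homo.
have [yx | nyx] := boolP (le15b y x).
  by exists y; apply/esym/meet_idPr/le15b_homo.
have [z [X [Y /and5P[gen zx zy xX yY]]]] := meet15_witness nxy nyx.
have fXY : f X `&` f Y = f z.
  by case/orP: gen => /f_meet_gen //; rewrite meetC.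
by exists z; apply/esym/(meet_sandwich _ _ (le15b_homo xX) (le15b_homo yY) fXY);
  apply: le15b_homo.
Qed.

Lemma f_join_closed x y : exists z, f z = f x `|` f y.
Proof.
have [xy | nxy] := boolP (le15b x y).
  by exists y; apply/esym/join_idPr/le15b_homo.
have [yx | nyx] := boolP (le15b y x).
  by exists x; apply/esym/join_idPl/le15b_homo.
have [z [X [Y /and5P[gen xz yz Xx Yy]]]] := join15_witness nxy nyx.
have fXY : f X `|` f Y = f z.
  by case/orP: gen => /f_join_gen //; rewrite joinC.
by exists z; apply/esym/(join_sandwich _ _ (le15b_homo Xx) (le15b_homo Yy) fXY);
  apply: le15b_homo.
Qed.

Lemma has_L15_sublattice_criterion : has_L15_sublattice L.
Proof.
by exists f; split; [exact: f_inj | exact: le15_mono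
                    | exact: f_meet_closed | exact: f_join_closed].
Qed.

End SublatticeCriterion.

Section Configuration.
Variables (d : Order.disp_t) (L : latticeType d) (a1 a2 a3 b1 b2 b3 : L).
Hypotheses (a12 : a1 <= a2) (a23 : a2 <= a3) (b12 : b1 <= b2) (b23 : b2 <= b3).
Hypotheses (a1b3 : a1 <= b3) (b1a3 : b1 <= a3).
Hypotheses (a2b1 : a2 >< b1) (a2b2 : a2 >< b2) (a2b3 : a2 >< b3).
Hypotheses (a1b2 : a1 >< b2) (a3b2 : a3 >< b2).
Hypothesis no_doubly_reducible : forall x : L, ~ doubly_reducible x.

Local Notation U := (a2 `&` b3).
Local Notation V := (a3 `&` b2).
Local Notation S := (a2 `|` V).
Local Notation T := (U `|` b2).

Definition config15 (x : L15) : L :=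
  match x with
  | L15_0 => a2 `&` b2 | L15_u => U | L15_v => V | L15_p => U `|` V
  | L15_q => S `&` T | L15_s => S | L15_t => T | L15_1 => a2 `|` b2
  | L15_g => a2 | L15_h => b2
  end.

Lemma S_le_a3 : S <= a3. Proof. by rewrite leUx a23 leIl. Qed.

Lemma T_le_b3 : T <= b3. Proof. by rewrite leUx leIr b23. Qed.

Lemma a1_le_U : a1 <= U. Proof. by rewrite lexI a12 a1b3. Qed.

Lemma b1_le_V : b1 <= V. Proof. by rewrite lexI b1a3 b12. Qed.

Lemma config15_cover x y : cover15 x y -> config15 x <= config15 y.
Proof.
case: x; case: y => //= _.
- exact: leI2.
- exact: leI2.
- exact: leUl.
- exact: leIl.
- exact: leUr.
- exact: leIr.
- rewrite lexI !leUx leUr leUl andbT /=.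
  by rewrite (lexUl _ (leIl _ _)) (lexUr _ (leIr _ _)).
- exact: leIl.
- exact: leIr.
- exact: leU2 (lexx _) (leIr _ _).
- exact: leU2 (leIl _ _) (lexx _).
- exact: leUl.
- exact: leUr.
Qed.

Lemma U_V_incomparable : U >< V.
Proof.
rewrite /Order.comparable negb_or (incomparable_nle a1b2 a1_le_U (leIr _ _)).
by rewrite (incomparable_nle _ b1_le_V (leIl _ _)) // comparable_sym.
Qed.

Lemma S_T_incomparable : S >< T.
Proof.
rewrite /Order.comparable negb_or (incomparable_nle a2b3 (leUl _ _) T_le_b3).
by rewrite (incomparable_nle _ (leUr _ _) S_le_a3) // comparable_sym.
Qed.

Lemma config15_q_nle_p : ~~ (S `&` T <= U `|` V).
Proof.
apply/negP => QP; apply: (@no_doubly_reducible (U `|` V)).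
exists U, V, S, T; split=> //; first exact: U_V_incomparable.
  exact: S_T_incomparable.
by apply/le_anti; rewrite QP (@config15_cover L15_p L15_q).
Qed.

Lemma config15_nle_gen j m : nle_gen15 j m -> ~~ (config15 j <= config15 m).
Proof.
have b1a2 : b1 >< a2 by rewrite comparable_sym.
have b2a2 : b2 >< a2 by rewrite comparable_sym.
have b2a3 : b2 >< a3 by rewrite comparable_sym.
case: j; case: m => //= _.
- exact: incomparable_nle a1b2 a1_le_U (lexx _).
- exact: incomparable_nle b1a2 b1_le_V (lexx _).
- exact: config15_q_nle_p.
- exact: incomparable_nle a2b3 (lexx _) T_le_b3.
- exact: incomparable_nle a2b2 (lexx _) (lexx _).
- exact: incomparable_nle b2a3 (lexx _) S_le_a3.
- exact: incomparable_nle b2a2 (lexx _) (lexx _).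
Qed.

Lemma config15_meet_gen X Y z :
  meet_gen15 X Y z -> config15 X `&` config15 Y = config15 z.
Proof.
case: X; case: Y; case: z => //= _.
- exact: meet_sandwich (leUr _ _) (leIr _ _) S_le_a3 (lexx _) erefl.
- exact: meet_sandwich (leIl _ _) (leUl _ _) (lexx _) T_le_b3 erefl.
Qed.

Lemma config15_join_gen X Y z :
  join_gen15 X Y z -> config15 X `|` config15 Y = config15 z.
Proof. by case: X; case: Y; case: z. Qed.

End Configuration.

Theorem lemma3p1 (d : Order.disp_t) (L : latticeType d)
    (a1 a2 a3 b1 b2 b3 : L) :
  (forall x : L, ~ doubly_reducible x) ->
  uniq [:: a1; a2; a3; b1; b2; b3] ->
  a1 < a2 -> a2 < a3 -> b1 < b2 -> b2 < b3 -> a1 < b3 -> b1 < a3 ->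
  a2 >< b1 -> a2 >< b2 -> a2 >< b3 ->
  a1 >< b2 -> a3 >< b2 ->
  a2 `|` b2 = a3 `|` b3 ->
  a2 `&` b2 = a1 `&` b1 ->
  has_L15_sublattice L.
Proof.
move=> no_dr _ /ltW a12 /ltW a23 /ltW b12 /ltW b23 /ltW a1b3 /ltW b1a3
  a2b1 a2b2 a2b3 a1b2 a3b2 _ _.
apply: (@has_L15_sublattice_criterion _ _ (config15 a2 a3 b2 b3)).
- by move=> x y; apply: config15_cover.
- by move=> j m; apply: (config15_nle_gen (a1 := a1) (b1 := b1)).
- by move=> X Y z; apply: config15_meet_gen.
- exact: config15_join_gen.
Qed.
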